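(* Let $(V,\{\nu_n\})$ be an $L^\infty$-MOS with unitization $(V_1,\{u_n\})$. For every $n$, $A\in M_n(V)_{sa}$ and $X\in(M_n)_{sa}$, the set $\{t>0: X_t\gg0,\ \nu_n(X_t^{-1/2}AX_t^{-1/2})\le1\}$ is nonempty, so $u_n(A,X)$ is a well-defined nonnegative real number. Moreover, for $B\in M_k(V)_{sa}$, $Y\in(M_k)_{sa}$ and $Z\in M_{n,k}$: $u_{n+k}((A\oplus B,X\oplus Y))=\max\{u_n(A,X),u_k(B,Y)\}$ and $u_k(Z^*AZ,Z^*XZ)\le\|Z\|^2u_n(A,X)$.
   Context: A gauge on a real vector space is a map $\nu$ into $[0,\infty)$ with $\nu(x+y)\le\nu(x)+\nu(y)$, $\nu(tx)=t\nu(x)$ ($t>0$); it is proper if $\nu(x)=\nu(-x)=0$ implies $x=0$. An $L^\infty$-matricially ordered space ($L^\infty$-MOS) is a complex $*$-vector space $V$ (with $M_n(V)$ carrying $(x_{ij})^*=(x_{ji}^* )$, and $M_n(V)_{sa}$ the self-adjoint part) together with proper gauges $\nu_n:M_n(V)_{sa}\to[0,\infty)$ such that $\nu_k(X^*AX)\le\|X\|^2\nu_n(A)$ for scalar $X\in M_{n,k}$, and $\nu_{n+k}(A\oplus B)=\max\{\nu_n(A),\nu_k(B)\}$. Unitization: $V_1=V\oplus\mathbb{C}$ with $M_{n,m}(V_1)$ identified with $M_{n,m}(V)\oplus M_{n,m}$ and $(A,X)^*=(A^*,X^* )$; for $X\in M_n$ set $X_t=tI_n-X$; for a scalar square matrix,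 $Y\gg0$ means $Y$ is positive and invertible; define $u_n(A,X)=\inf\{t>0:X_t\gg0,\ \nu_n(X_t^{-1/2}AX_t^{-1/2})\le1\}$ for $(A,X)\in M_n(V_1)_{sa}$. *)

(* Complex scalars: an arbitrary numClosedFieldType C whose
   real elements are Dedekind complete (hypothesis [real_complete C]); such a
   C is (isomorphic to) the field of complex numbers. *)
From HB Require Import structures.
From mathcomp Require Import all_boot all_order all_algebra.
From Stdlib Require Import ClassicalEpsilon.
Set Implicit Arguments. Unset Strict Implicit. Unset Printing Implicit Defensive.
Import Order.TTheory GRing.Theory Num.Theory.
Local Open Scope ring_scope.
Local Open Scope sesquilinear_scope.

Section Defs.
Variable C : numClosedFieldType.

Definition is_glb (S : C -> Prop) (g : C) :=
  (forall x, S x -> g <= x) /\ (forall b, (forall x, S x -> b <= x) -> b <= g).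
Definition is_lub (S : C -> Prop) (g : C) :=
  (forall x, S x -> x <= g) /\ (forall b, (forall x, S x -> x <= b) -> g <= b).

(* infimum / supremum (chosen via classical choice; meaningful when they exist) *)
Definition inf (S : C -> Prop) : C := epsilon (inhabits 0) (is_glb S).
Definition sup (S : C -> Prop) : C := epsilon (inhabits 0) (is_lub S).

Definition real_complete :=
  forall S : C -> Prop, (forall x, S x -> x \is Num.real) ->
    (exists x, S x) -> (exists b, forall x, S x -> b <= x) ->
    exists g, is_glb S g.

Definition vnorm n (v : 'cV[C]_n) : C := sqrtC (\sum_(i < n) `|v i 0| ^+ 2).
Definition opnorm m n (Z : 'M[C]_(m, n)) : C :=
  sup (fun r => exists v : 'cV[C]_n, vnorm v <= 1 /\ r = vnorm (Z *m v)).

Definition psdmx n (Y : 'M[C]_n) :=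
  Y \is hermsymmx /\ forall v : 'cV[C]_n, 0 <= (v ^t* *m Y *m v) 0 0.
Definition pdmx n (Y : 'M[C]_n) := psdmx Y /\ Y \in unitmx.
Definition msqrt n (Y : 'M[C]_n) : 'M[C]_n :=
  epsilon (inhabits 0) (fun S => psdmx S /\ S *m S = Y).

Variable V : lmodType C.

Definition is_star (star : V -> V) :=
  (forall (a : C) (x y : V), star (a *: x + y) = a^* *: star x + star y) /\
  involutive star.

Definition adjV (star : V -> V) m n (A : 'M[V]_(m, n)) : 'M[V]_(n, m) :=
  \matrix_(i, j) star (A j i).
Definition sa (star : V -> V) n (A : 'M[V]_n) := A = adjV star A.
Definition lrmul m n p q (L : 'M[C]_(m, n)) (A : 'M[V]_(n, p)) (R : 'M[C]_(p, q))
  : 'M[V]_(m, q) :=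
  \matrix_(i, j) \sum_(a < n) \sum_(b < p) (L i a * R b j) *: A a b.

(* L^oo-matricially ordered space: gauges nu_n on M_n(V)_sa (values of nu
   outside the self-adjoint part are irrelevant) *)
Definition Linf_MOS (star : V -> V) (nu : forall n, 'M[V]_n -> C) :=
  (forall n (A : 'M[V]_n), sa star A -> 0 <= nu n A) /\
      (forall n (A B : 'M[V]_n), sa star A -> sa star B ->
        nu n (A + B) <= nu n A + nu n B) /\
      (forall n (t : C) (A : 'M[V]_n), sa star A -> 0 < t ->
        nu n (map_mx (fun v => t *: v) A) = t * nu n A) /\
      (forall n (A : 'M[V]_n), sa star A -> nu n A = 0 -> nu n (- A) = 0 -> A = 0) /\
      (forall n k (X : 'M[C]_(n, k)) (A : 'M[V]_n), sa star A ->
        nu k (lrmul (X ^t*) A X) <= opnorm X ^+ 2 * nu n A) /\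
    (forall n k (A : 'M[V]_n) (B : 'M[V]_k), sa star A -> sa star B ->
        nu (n + k)%N (block_mx A 0 0 B) = Num.max (nu n A) (nu k B)).

Definition uset (nu : forall n, 'M[V]_n -> C) n (A : 'M[V]_n) (X : 'M[C]_n)
  : C -> Prop :=
  fun t => 0 < t /\ pdmx (t%:M - X) /\
    nu n (lrmul (invmx (msqrt (t%:M - X))) A (invmx (msqrt (t%:M - X)))) <= 1.
Definition unorm (nu : forall n, 'M[V]_n -> C) n (A : 'M[V]_n) (X : 'M[C]_n) : C :=
  inf (uset nu A X).

End Defs.

(* The heart of the argument is a transfer principle for the normalised gauge.
   Let T = S^2 and T' = S'^2 be positive definite with invertible Hermitian
   square roots S, S', and suppose Z^* T Z <= T' in the Loewner order.  Then
   W = S Z S'^-1 is a contraction and S'^-1 (Z^* A Z) S'^-1 = W^* (S^-1 A S^-1) W,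
   so nu(S'^-1 (Z^* A Z) S'^-1) <= nu(S^-1 A S^-1).
   With Z = 1 this shows that the admissible set of (A, X) is upward closed and
   that any Hermitian root of X_t may replace X_t^(1/2); with T' = s - Z^* X Z
   and s > ||Z||^2 t it gives the compression inequality.  The admissible set is
   nonempty because X_t >= d for t large, whence
   nu(X_t^(-1/2) A X_t^(-1/2)) <= nu(A) / d, and completeness of the reals
   provides the infimum.  For direct sums, X_s^(1/2) (+) Y_s^(1/2) is a root of
   (X (+) Y)_s, which gives u(A (+) B) <= max; compressing by the two coordinate
   isometries gives the reverse inequality. *)

From HB Require Import structures.
From mathcomp Require Import all_boot all_order all_algebra.
From Stdlib Require Import ClassicalEpsilon Classical.
Set Implicit Arguments. Unset Strict Implicit. Unset Printing Implicit Defensive.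
Import Order.TTheory GRing.Theory Num.Theory.
Local Open Scope ring_scope.
Local Open Scope sesquilinear_scope.

Section ConjugateTranspose.
Variable C : numClosedFieldType.

Lemma trmxC_mul m n p (A : 'M[C]_(m, n)) (B : 'M[C]_(n, p)) :
  (A *m B) ^t* = B ^t* *m A ^t*.
Proof. by rewrite trmx_mul map_mxM. Qed.

Lemma trmxCB m n (A B : 'M[C]_(m, n)) : (A - B) ^t* = A ^t* - B ^t*.
Proof. by rewrite linearB /= map_mxB. Qed.

Lemma trmxCZ m n a (A : 'M[C]_(m, n)) : (a *: A) ^t* = a^* *: A ^t*.
Proof. by rewrite linearZ /= map_mxZ. Qed.

Lemma trmxC0 m n : (0 : 'M[C]_(m, n)) ^t* = 0.
Proof. by rewrite trmx0 map_mx0. Qed.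

Lemma trmxC_scalar n a : (a%:M : 'M[C]_n) ^t* = a^*%:M.
Proof. by rewrite tr_scalar_mx map_scalar_mx. Qed.

Lemma trmxC1 n : (1%:M : 'M[C]_n) ^t* = 1%:M.
Proof. by rewrite trmxC_scalar conjC1. Qed.

Lemma trmxCV n (A : 'M[C]_n) : (invmx A) ^t* = invmx (A ^t*).
Proof. by rewrite trmx_inv map_invmx. Qed.

Lemma hermsymmxCP n (M : 'M[C]_n) : reflect (M ^t* = M) (M \is hermsymmx).
Proof.
apply: (iffP idP) => [/is_hermitianmxP|hM]; first by rewrite expr0 scale1r => <-.
by apply/is_hermitianmxP; rewrite expr0 scale1r hM.
Qed.

Lemma hermsymmx_conj n k (X : 'M[C]_n) (Z : 'M[C]_(n, k)) :
  X \is hermsymmx -> Z ^t* *m X *m Z \is hermsymmx.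
Proof.
by move=> /hermsymmxCP hX; apply/hermsymmxCP; rewrite !trmxC_mul trmxCK hX mulmxA.
Qed.

Lemma hermsymmx_shift n t (X : 'M[C]_n) : t \is Num.real -> X \is hermsymmx ->
  t%:M - X \is hermsymmx.
Proof.
move=> tR /hermsymmxCP hX; apply/hermsymmxCP.
by rewrite trmxCB trmxC_scalar conj_Creal // hX.
Qed.

Lemma hermsymmx_block n k (X : 'M[C]_n) (Y : 'M[C]_k) :
  X \is hermsymmx -> Y \is hermsymmx -> block_mx X 0 0 Y \is hermsymmx.
Proof.
move=> /hermsymmxCP hX /hermsymmxCP hY; apply/hermsymmxCP.
by rewrite tr_block_mx map_block_mx hX hY !trmxC0.
Qed.

End ConjugateTranspose.

Section HermitianForms.
Variable C : numClosedFieldType.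

Definition qform n (M : 'M[C]_n) (v : 'cV[C]_n) : C := (v ^t* *m M *m v) 0 0.
Definition sqnorm n (v : 'cV[C]_n) : C := (v ^t* *m v) 0 0.

Lemma sqnormE n (v : 'cV[C]_n) : sqnorm v = \sum_i `|v i 0| ^+ 2.
Proof. by rewrite /sqnorm mxE; apply: eq_bigr => i _; rewrite !mxE normCKC. Qed.

Lemma sqnorm_ge0 n (v : 'cV[C]_n) : 0 <= sqnorm v.
Proof. by rewrite sqnormE sumr_ge0 // => i _; rewrite exprn_ge0. Qed.

Lemma sqnorm_eq0 n (v : 'cV[C]_n) : sqnorm v = 0 -> v = 0.
Proof.
rewrite sqnormE => /eqP; rewrite psumr_eq0 => [/allP v0|i _]; last exact: exprn_ge0.
apply/matrixP => i j; rewrite ord1 mxE.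
by have /implyP/(_ isT) := v0 i (mem_index_enum i); rewrite sqrf_eq0 normr_eq0 => /eqP.
Qed.

Lemma sqnorm_entry_le n (v : 'cV[C]_n) i : `|v i 0| ^+ 2 <= sqnorm v.
Proof. by rewrite sqnormE (bigD1 i) //= lerDl sumr_ge0 // => j _; rewrite exprn_ge0. Qed.

Lemma sqnorm0 n : sqnorm (0 : 'cV[C]_n) = 0.
Proof. by rewrite /sqnorm mulmx0 mxE. Qed.

Lemma sqnormZ n a (v : 'cV[C]_n) : sqnorm (a *: v) = `|a| ^+ 2 * sqnorm v.
Proof.
by rewrite /sqnorm trmxCZ -scalemxAl -scalemxAr scalerA !mxE normCKC mulrC.
Qed.

Lemma sqnorm_mulmx n k (Z : 'M[C]_(n, k)) v : sqnorm (Z *m v) = qform (Z ^t* *m Z) v.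
Proof. by rewrite /sqnorm /qform trmxC_mul !mulmxA. Qed.

Lemma qformE n (M : 'M[C]_n) v : qform M v = \sum_j \sum_i (v i 0)^* * M i j * v j 0.
Proof.
rewrite /qform mxE; apply: eq_bigr => j _; rewrite mxE mulr_suml.
by apply: eq_bigr => i _; rewrite !mxE.
Qed.

Lemma qformB n (M N : 'M[C]_n) v : qform (M - N) v = qform M v - qform N v.
Proof. by rewrite /qform mulmxBr mulmxBl !mxE. Qed.

Lemma qform_scalar n a (v : 'cV[C]_n) : qform a%:M v = a * sqnorm v.
Proof. by rewrite /qform mul_mx_scalar -scalemxAl mxE. Qed.

Lemma qform_shift n t (X : 'M[C]_n) v : qform (t%:M - X) v = t * sqnorm v - qform X v.
Proof. by rewrite qformB qform_scalar. Qed.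

Lemma qform_conj n k (M : 'M[C]_n) (Z : 'M[C]_(n, k)) v :
  qform (Z ^t* *m M *m Z) v = qform M (Z *m v).
Proof. by rewrite /qform trmxC_mul !mulmxA. Qed.

Lemma qform_real n (M : 'M[C]_n) v : M \is hermsymmx -> qform M v \is Num.real.
Proof.
move=> /hermsymmxCP hM; rewrite CrealE; apply/eqP.
have e : qform M v = (v ^t* *m M *m v) ^t* 0 0.
  by rewrite !trmxC_mul trmxCK hM mulmxA.
by rewrite [in RHS]e mxE [in RHS]mxE.
Qed.

Lemma qform_le_sqnorm n (M : 'M[C]_n) : M \is hermsymmx ->
  exists2 c, 0 <= c & forall v, qform M v <= c * sqnorm v.
Proof.
move=> hM; exists (\sum_j \sum_i `|M i j|) => [|v].
  by apply: sumr_ge0 => j _; apply: sumr_ge0.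
apply: le_trans (real_ler_norm (qform_real v hM)) _.
rewrite qformE mulr_suml; apply: le_trans (ler_norm_sum _ _ _) _.
apply: ler_sum => j _; rewrite mulr_suml; apply: le_trans (ler_norm_sum _ _ _) _.
apply: ler_sum => i _; rewrite !normrM norm_conjC mulrAC [leRHS]mulrC ler_wpM2r //.
have [vi0 vj0] := (normr_ge0 (v i 0), normr_ge0 (v j 0)).
case/orP: (real_leVge (normr_real (v i 0)) (normr_real (v j 0))) => vij.
  by apply: le_trans (sqnorm_entry_le v j); rewrite expr2 ler_pM.
by apply: le_trans (sqnorm_entry_le v i); rewrite expr2 ler_pM.
Qed.

Lemma unitmx_inj n (M : 'M[C]_n) :
  (forall v : 'cV[C]_n, M *m v = 0 -> v = 0) -> M \in unitmx.
Proof.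
move=> Minj; rewrite -unitmx_tr -row_free_unit; apply: inj_row_free => v vM0.
apply: trmx_inj; rewrite trmx0; apply: Minj.
by rewrite -[M]trmxK -trmx_mul vM0 trmx0.
Qed.

Lemma pdmx_coercive n (M : 'M[C]_n) d : M \is hermsymmx -> 0 < d ->
  (forall v, d * sqnorm v <= qform M v) -> pdmx M.
Proof.
move=> hM d0 Mge; split; first split => // v.
  by apply: le_trans (Mge v); rewrite mulr_ge0 ?sqnorm_ge0 ?ltW.
apply: unitmx_inj => v Mv0; apply: sqnorm_eq0; apply/eqP; rewrite eq_le sqnorm_ge0 andbT.
have := Mge v; rewrite /qform -mulmxA Mv0 mulmx0 mxE pmulr_rle0 //.
Qed.

End HermitianForms.

Section SquareRoots.
Variable C : numClosedFieldType.

Lemma qform_diag n (s : 'rV[C]_n) w :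
  qform (diag_mx s) w = \sum_j `|w j 0| ^+ 2 * s 0 j.
Proof.
rewrite qformE; apply: eq_bigr => j _.
rewrite (bigD1 j) //= big1 ?addr0 => [|i /negbTE nij]; last first.
  by rewrite !mxE nij mulr0n mulr0 mul0r.
by rewrite !mxE eqxx mulr1n normCKC mulrAC.
Qed.

Lemma psdmx_sqrt n (T : 'M[C]_n) : psdmx T -> exists S, psdmx S /\ S *m S = T.
Proof.
move=> [hT T_ge0].
have /orthomx_spectralP T_spec := hermitian_normalmx hT.
set P := spectralmx T in T_spec; set d := spectral_diag T in T_spec.
have uP : P \is unitarymx := spectral_unitarymx T.
have qform_spectral M v : qform (invmx P *m M *m P) v = qform M (P *m v).
  by rewrite invmx_unitary // qform_conj.
have d_ge0 j : 0 <= d 0 j.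
  have := T_ge0 (P ^t* *m delta_mx j 0).
  rewrite -/(qform T _) {1}T_spec qform_spectral mulmxA (unitarymxP uP) mul1mx qform_diag.
  rewrite (bigD1 j) //= big1 ?addr0 => [|i /negbTE nij]; last first.
    by rewrite mxE nij andbT normr0 expr0n mul0r.
  by rewrite mxE !eqxx /= normr1 expr1n mul1r.
set s := map_mx sqrtC d.
exists (invmx P *m diag_mx s *m P); split; first split.
- apply/hermsymmxCP; rewrite !trmxC_mul trmxCV -(invmx_unitary uP) invmxK mulmxA.
  rewrite tr_diag_mx map_diag_mx; congr (_ *m diag_mx _ *m _).
  by apply/matrixP => i j; rewrite ord1 !mxE /= conj_Creal // ger0_real // sqrtC_ge0.
- move=> v; rewrite -/(qform _ _) qform_spectral qform_diag.
  by apply: sumr_ge0 => j _; rewrite mulr_ge0 ?exprn_ge0 // mxE sqrtC_ge0.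
- rewrite [in RHS]T_spec -!mulmxA; congr (_ *m _).
  rewrite !mulmxA mulmxK ?spectral_unit //.
  congr (_ *m _); apply/matrixP => i j; rewrite mul_diag_mx !mxE.
  by case: (eqVneq i j) => [->|_]; rewrite ?mulr0n ?mulr0 // !mulr1n -expr2 sqrtCK.
Qed.

Definition hroot n (S T : 'M[C]_n) := [/\ S ^t* = S, S \in unitmx & S *m S = T].

Lemma msqrt_hroot n (T : 'M[C]_n) : pdmx T -> hroot (msqrt T) T.
Proof.
move=> [T_ge0 T_unit].
have [[/hermsymmxCP hS _] eS] : psdmx (msqrt T) /\ msqrt T *m msqrt T = T.
  have [S hS] := psdmx_sqrt T_ge0.
  by apply: (epsilon_spec (inhabits 0) (fun S => psdmx S /\ S *m S = T)); exists S.
have : msqrt T *m msqrt T \in unitmx by rewrite eS.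
by rewrite unitmx_mul => /andP[uS _]; split.
Qed.

Lemma hroot_pdmx n (S T : 'M[C]_n) : hroot S T -> pdmx T.
Proof.
move=> [hS uS <-]; split; last by rewrite unitmx_mul uS.
split; first by apply/hermsymmxCP; rewrite trmxC_mul hS.
by move=> v; rewrite -/(qform _ _) -{1}hS -sqnorm_mulmx sqnorm_ge0.
Qed.

Lemma sqnorm_hroot n (S T : 'M[C]_n) v : hroot S T -> sqnorm (S *m v) = qform T v.
Proof. by move=> [hS _ <-]; rewrite sqnorm_mulmx hS. Qed.

Lemma qform_hroot_inv n (S T : 'M[C]_n) v :
  hroot S T -> qform T (invmx S *m v) = sqnorm v.
Proof.
by move=> rS; rewrite -(sqnorm_hroot _ rS) mulmxA mulmxV ?mul1mx //; case: rS.
Qed.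

Lemma hroot_block n k (S T : 'M[C]_n) (S' T' : 'M[C]_k) :
  hroot S T -> hroot S' T' -> hroot (block_mx S 0 0 S') (block_mx T 0 0 T').
Proof.
move=> [hS uS eS] [hS' uS' eS']; split.
- by rewrite tr_block_mx map_block_mx hS hS' !trmxC0.
- by rewrite block_diag_mx_unit uS uS'.
- by rewrite mulmx_block !(mulmx0, mul0mx, addr0, add0r) eS eS'.
Qed.

End SquareRoots.

Section OperatorNorm.
Variable C : numClosedFieldType.
Hypothesis C_complete : real_complete C.

Lemma inf_is_glb (S : C -> Prop) : (forall x, S x -> x \is Num.real) ->
  (exists x, S x) -> (exists b, forall x, S x -> b <= x) -> is_glb S (inf S).
Proof.
move=> SR S0 Sb; have [g Sg] := C_complete SR S0 Sb.
by apply: (epsilon_spec (inhabits 0) (is_glb S)); exists g.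
Qed.

Lemma sup_is_lub (S : C -> Prop) : (forall x, S x -> x \is Num.real) ->
  (exists x, S x) -> (exists b, forall x, S x -> x <= b) -> is_lub S (sup S).
Proof.
move=> SR [x Sx] [b Sb].
have [g [g_lb g_glb]] : exists g, is_glb (fun y => S (- y)) g.
  apply: C_complete; first by move=> y /SR; rewrite realN.
    by exists (- x); rewrite opprK.
  by exists (- b) => y /Sb; rewrite lerNl.
apply: (epsilon_spec (inhabits 0) (is_lub S)); exists (- g); split.
  by move=> y Sy; rewrite lerNr; apply: g_lb; rewrite opprK.
by move=> c Sc; rewrite lerNl; apply: g_glb => y /Sc; rewrite lerNl.
Qed.

Lemma is_glb_lt (S : C -> Prop) g s : is_glb S g -> g < s ->
  (forall x, S x -> x \is Num.real) -> s \is Num.real -> exists2 a, S a & a < s.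
Proof.
move=> [_ g_glb] lt_gs SR sR; apply: NNPP => noS.
suff le_sg : s <= g by have := le_lt_trans le_sg lt_gs; rewrite ltxx.
apply: g_glb => x Sx; case: (real_leP sR (SR _ Sx)) => // lt_xs.
by case: noS; exists x.
Qed.

Lemma vnormE n (v : 'cV[C]_n) : vnorm v = sqrtC (sqnorm v).
Proof. by rewrite /vnorm sqnormE. Qed.

Lemma sqnorm_le_sqr n (v : 'cV[C]_n) r : 0 <= r -> vnorm v <= r -> sqnorm v <= r ^+ 2.
Proof.
by move=> r0; rewrite vnormE -{1}(sqrCK r0) ler_sqrtC // nnegrE ?sqnorm_ge0 ?exprn_ge0.
Qed.

Lemma opnorm_is_lub m n (Z : 'M[C]_(m, n)) :
  is_lub (fun r => exists v : 'cV[C]_n, vnorm v <= 1 /\ r = vnorm (Z *m v)) (opnorm Z).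
Proof.
have hZ : Z ^t* *m Z \is hermsymmx by apply/hermsymmxCP; rewrite trmxC_mul trmxCK.
have [c c_ge0 Zc] := qform_le_sqnorm hZ.
apply: sup_is_lub.
- by move=> r [v [_ ->]]; rewrite vnormE ger0_real // sqrtC_ge0 sqnorm_ge0.
- by exists (vnorm (Z *m 0)), 0; rewrite vnormE sqnorm0 sqrtC0.
exists (sqrtC c) => r [v [v_le1 ->]].
rewrite vnormE ler_sqrtC ?nnegrE ?sqnorm_ge0 // sqnorm_mulmx.
have {}v_le1 : sqnorm v <= 1 by rewrite -(expr1n _ 2) sqnorm_le_sqr.
by apply: le_trans (Zc v) _; rewrite ler_piMr.
Qed.

Lemma opnorm_ge0 m n (Z : 'M[C]_(m, n)) : 0 <= opnorm Z.
Proof.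
have [Z_ub _] := opnorm_is_lub Z; apply: Z_ub; exists 0.
by rewrite mulmx0 !vnormE !sqnorm0 sqrtC0 ler01.
Qed.

Lemma opnorm_le m n (Z : 'M[C]_(m, n)) r : 0 <= r ->
  (forall v, sqnorm (Z *m v) <= r ^+ 2 * sqnorm v) -> opnorm Z <= r.
Proof.
move=> r0 Zr; have [_ Z_lub] := opnorm_is_lub Z; apply: Z_lub => _ [v [v_le1 ->]].
rewrite vnormE -(sqrCK r0) ler_sqrtC ?nnegrE ?sqnorm_ge0 ?exprn_ge0 //.
apply: le_trans (Zr v) _.
by rewrite ler_piMr ?exprn_ge0 // -(expr1n _ 2) sqnorm_le_sqr.
Qed.

Lemma sqnorm_mulmx_le m n (Z : 'M[C]_(m, n)) v :
  sqnorm (Z *m v) <= opnorm Z ^+ 2 * sqnorm v.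
Proof.
have [/sqnorm_eq0 ->|v_neq0] := eqVneq (sqnorm v) 0.
  by rewrite mulmx0 !sqnorm0 mulr0.
have v_gt0 : 0 < sqnorm v by rewrite lt_def v_neq0 sqnorm_ge0.
pose w := (sqrtC (sqnorm v))^-1 *: v.
have normw : `|(sqrtC (sqnorm v))^-1| ^+ 2 = (sqnorm v)^-1.
  by rewrite normfV ger0_norm ?sqrtC_ge0 ?sqnorm_ge0 // exprVn sqrtCK.
have [Z_ub _] := opnorm_is_lub Z.
have Zw : vnorm (Z *m w) <= opnorm Z.
  by apply: Z_ub; exists w; rewrite vnormE sqnormZ normw mulVf // sqrtC1.
have := sqnorm_le_sqr (opnorm_ge0 Z) Zw.
by rewrite -scalemxAr sqnormZ normw ler_pdivrMl // mulrC.
Qed.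

Lemma opnorm_invmx_hroot n (S T : 'M[C]_n) d : hroot S T -> 0 < d ->
  (forall v, d * sqnorm v <= qform T v) -> opnorm (invmx S) ^+ 2 <= d^-1.
Proof.
move=> rS d0 Td; rewrite -[d^-1]sqrtCK.
have r0 : 0 <= sqrtC d^-1 by rewrite sqrtC_ge0 invr_ge0 ltW.
have : opnorm (invmx S) <= sqrtC d^-1.
  apply: opnorm_le => // v; rewrite sqrtCK ler_pdivlMl //.
  by rewrite -(qform_hroot_inv v rS).
by move=> Sd; rewrite !expr2 ler_pM ?opnorm_ge0.
Qed.

End OperatorNorm.

Section CongruenceProducts.
Variables (C : numClosedFieldType) (V : lmodType C).

Lemma lrmulD m n p q (L : 'M[C]_(m, n)) (A B : 'M[V]_(n, p)) (R : 'M[C]_(p, q)) :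
  lrmul L (A + B) R = lrmul L A R + lrmul L B R.
Proof.
apply/matrixP => i j; rewrite !mxE -big_split; apply: eq_bigr => a _.
by rewrite -big_split; apply: eq_bigr => b _; rewrite mxE scalerDr.
Qed.

Lemma lrmul0l m n p q (A : 'M[V]_(n, p)) (R : 'M[C]_(p, q)) :
  lrmul (0 : 'M[C]_(m, n)) A R = 0.
Proof.
apply/matrixP => i j; rewrite !mxE big1 // => a _.
by rewrite big1 // => b _; rewrite mxE mul0r scale0r.
Qed.

Lemma lrmul_mulmx m n p q m' q' (L : 'M[C]_(m', m)) (L' : 'M[C]_(m, n))
    (A : 'M[V]_(n, p)) (R' : 'M[C]_(p, q)) (R : 'M[C]_(q, q')) :
  lrmul L (lrmul L' A R') R = lrmul (L *m L') A (R' *m R).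
Proof.
apply/matrixP => i j; rewrite !mxE.
under eq_bigr => a _ do under eq_bigr => b _ do rewrite mxE scaler_sumr /=.
under eq_bigr => a _ do rewrite exchange_big /=.
rewrite exchange_big /=; apply: eq_bigr => c _.
under eq_bigr => a _ do under eq_bigr => b _ do rewrite scaler_sumr /=.
under eq_bigr => a _ do rewrite exchange_big /=.
rewrite exchange_big /=; apply: eq_bigr => d _.
rewrite !mxE mulr_suml scaler_suml; apply: eq_bigr => a _.
rewrite mulr_sumr scaler_suml; apply: eq_bigr => b _.
by rewrite scalerA mulrACA [R b j * _]mulrC.
Qed.

Lemma lrmul_deltaE m n p q (L : 'M[C]_(m, n)) (A : 'M[V]_(n, p)) (R : 'M[C]_(p, q))
    i j a0 b0 :
  (forall a, L i a = (a == a0)%:R) -> (forall b, R b j = (b == b0)%:R) ->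
  lrmul L A R i j = A a0 b0.
Proof.
move=> Li Rj; rewrite mxE (bigD1 a0) //= [X in _ + X]big1 => [|a /negbTE a_neq].
  rewrite addr0 (bigD1 b0) //= [X in _ + X]big1 => [|b /negbTE b_neq].
    by rewrite Li Rj !eqxx mulr1 scale1r addr0.
  by rewrite Rj b_neq mulr0 scale0r.
by rewrite big1 // => b _; rewrite Li a_neq mul0r scale0r.
Qed.

Lemma lrmul_row0 m n p q (L : 'M[C]_(m, n)) (A : 'M[V]_(n, p)) (R : 'M[C]_(p, q)) i j :
  (forall a, L i a = 0) -> lrmul L A R i j = 0.
Proof.
move=> Li; rewrite mxE big1 // => a _.
by rewrite big1 // => b _; rewrite Li mul0r scale0r.
Qed.

Lemma lrmul_col0 m n p q (L : 'M[C]_(m, n)) (A : 'M[V]_(n, p)) (R : 'M[C]_(p, q)) i j :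
  (forall b, R b j = 0) -> lrmul L A R i j = 0.
Proof.
move=> Rj; rewrite mxE big1 // => a _.
by rewrite big1 // => b _; rewrite Rj mulr0 scale0r.
Qed.

Lemma lrmul1 n p (A : 'M[V]_(n, p)) : lrmul 1%:M A 1%:M = A.
Proof. by apply/matrixP => i j; apply: lrmul_deltaE => a; rewrite !mxE // eq_sym. Qed.

Definition inl_mx n k : 'M[C]_(n + k, n) := col_mx 1%:M 0.
Definition inr_mx n k : 'M[C]_(n + k, k) := col_mx 0 1%:M.

Lemma trmxC_inl n k : (inl_mx n k) ^t* = row_mx 1%:M 0.
Proof. by rewrite tr_col_mx map_row_mx trmx1 trmx0 map_mx1 map_mx0. Qed.

Lemma trmxC_inr n k : (inr_mx n k) ^t* = row_mx 0 1%:M.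
Proof. by rewrite tr_col_mx map_row_mx trmx1 trmx0 map_mx1 map_mx0. Qed.

Lemma inl_mx_isometry n k : (inl_mx n k) ^t* *m inl_mx n k = 1%:M.
Proof. by rewrite trmxC_inl mul_row_col mulmx1 mul0mx addr0. Qed.

Lemma inr_mx_isometry n k : (inr_mx n k) ^t* *m inr_mx n k = 1%:M.
Proof. by rewrite trmxC_inr mul_row_col mulmx1 mul0mx add0r. Qed.

Lemma inl_mx_block n k (X : 'M[C]_n) (Y : 'M[C]_k) :
  (inl_mx n k) ^t* *m block_mx X 0 0 Y *m inl_mx n k = X.
Proof.
rewrite trmxC_inl mul_row_block mul_row_col.
by rewrite !(mulmx1, mul1mx, mulmx0, mul0mx, addr0, add0r).
Qed.

Lemma inr_mx_block n k (X : 'M[C]_n) (Y : 'M[C]_k) :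
  (inr_mx n k) ^t* *m block_mx X 0 0 Y *m inr_mx n k = Y.
Proof.
rewrite trmxC_inr mul_row_block mul_row_col.
by rewrite !(mulmx1, mul1mx, mulmx0, mul0mx, addr0, add0r).
Qed.

Lemma block_mx_lrmul n k (A : 'M[V]_n) (B : 'M[V]_k) :
  block_mx A 0 0 B =
  lrmul (inl_mx n k) A ((inl_mx n k) ^t*) + lrmul (inr_mx n k) B ((inr_mx n k) ^t*).
Proof.
rewrite trmxC_inl trmxC_inr; apply/matrixP => i j; rewrite [RHS]mxE.
have inlE a b : (inl_mx n k) (lshift k a) b = (b == a)%:R.
  by rewrite col_mxEu mxE eq_sym.
have inrE a b : (inr_mx n k) (rshift n a) b = (b == a)%:R.
  by rewrite col_mxEd mxE eq_sym.
have inl0 a b : (inl_mx n k) (rshift n a) b = 0 by rewrite col_mxEd mxE.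
have inr0 a b : (inr_mx n k) (lshift k a) b = 0 by rewrite col_mxEu mxE.
case: (split_ordP i) => a ->; case: (split_ordP j) => b ->.
- rewrite block_mxEul [X in _ + X]lrmul_row0 ?addr0 => [|c]; last exact: inr0.
  by symmetry; apply: lrmul_deltaE => c; [exact: inlE | rewrite row_mxEl mxE].
- rewrite block_mxEur mxE [X in _ + X]lrmul_row0 ?addr0 => [|c]; last exact: inr0.
  by rewrite lrmul_col0 // => c; rewrite row_mxEr mxE.
- rewrite block_mxEdl mxE [X in X + _]lrmul_row0 ?add0r => [|c]; last exact: inl0.
  by rewrite lrmul_col0 // => c; rewrite row_mxEl mxE.
- rewrite block_mxEdr [X in X + _]lrmul_row0 ?add0r => [|c]; last exact: inl0.
  by symmetry; apply: lrmul_deltaE => c; [exact: inrE | rewrite row_mxEr mxE].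
Qed.

Lemma lrmul_block_diag n k (A : 'M[V]_n) (B : 'M[V]_k) (P P' : 'M[C]_n) (Q Q' : 'M[C]_k) :
  lrmul (block_mx P 0 0 Q) (block_mx A 0 0 B) (block_mx P' 0 0 Q') =
  block_mx (lrmul P A P') 0 0 (lrmul Q B Q').
Proof.
rewrite !block_mx_lrmul lrmulD !lrmul_mulmx trmxC_inl trmxC_inr /inl_mx /inr_mx.
rewrite !mul_block_col !mul_row_block !mul_col_mx !mul_mx_row.
by rewrite !(mulmx1, mul1mx, mulmx0, mul0mx, addr0, add0r).
Qed.

Lemma lrmul_inl_block n k (A : 'M[V]_n) (B : 'M[V]_k) :
  lrmul ((inl_mx n k) ^t*) (block_mx A 0 0 B) (inl_mx n k) = A.
Proof.
rewrite block_mx_lrmul lrmulD !lrmul_mulmx trmxC_inl trmxC_inr /inl_mx /inr_mx.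
rewrite !mul_row_col !(mulmx1, mul1mx, mulmx0, mul0mx, addr0, add0r).
by rewrite lrmul1 lrmul0l addr0.
Qed.

Lemma lrmul_inr_block n k (A : 'M[V]_n) (B : 'M[V]_k) :
  lrmul ((inr_mx n k) ^t*) (block_mx A 0 0 B) (inr_mx n k) = B.
Proof.
rewrite block_mx_lrmul lrmulD !lrmul_mulmx trmxC_inl trmxC_inr /inl_mx /inr_mx.
rewrite !mul_row_col !(mulmx1, mul1mx, mulmx0, mul0mx, addr0, add0r).
by rewrite lrmul1 lrmul0l add0r.
Qed.

End CongruenceProducts.

Section SelfAdjoint.
Variables (C : numClosedFieldType) (V : lmodType C) (star : V -> V).
Hypothesis starV : is_star star.

Lemma starD x y : star (x + y) = star x + star y.
Proof. by case: starV => starL _; rewrite -{1}[x]scale1r starL conjC1 scale1r. Qed.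

Lemma star0 : star 0 = 0.
Proof. by apply: (@addrI _ (star 0)); rewrite -starD !addr0. Qed.

Lemma starZ a x : star (a *: x) = a^* *: star x.
Proof. by case: starV => starL _; rewrite -[a *: x]addr0 starL star0 addr0. Qed.

Lemma star_sum (I : Type) (r : seq I) (F : I -> V) :
  star (\sum_(i <- r) F i) = \sum_(i <- r) star (F i).
Proof. exact: (big_morph _ starD star0). Qed.

Lemma saP n (A : 'M[V]_n) : sa star A <-> forall i j, star (A i j) = A j i.
Proof.
split => [hA i j | hA]; first by rewrite [in RHS]hA mxE.
by apply/matrixP => i j; rewrite mxE hA.
Qed.

Lemma saD n (A B : 'M[V]_n) : sa star A -> sa star B -> sa star (A + B).
Proof. by move=> /saP hA /saP hB; apply/saP => i j; rewrite !mxE starD hA hB. Qed.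

Lemma sa_lrmul n k (A : 'M[V]_n) (R : 'M[C]_(n, k)) :
  sa star A -> sa star (lrmul (R ^t*) A R).
Proof.
move=> /saP hA; apply/saP => i j; rewrite !mxE star_sum exchange_big /=.
apply: eq_bigr => b _; rewrite star_sum; apply: eq_bigr => a _.
by rewrite starZ hA !mxE rmorphM /= conjCK mulrC.
Qed.

Lemma sa_block n k (A : 'M[V]_n) (B : 'M[V]_k) :
  sa star A -> sa star B -> sa star (block_mx A 0 0 B).
Proof.
move=> hA hB; rewrite block_mx_lrmul.
by apply: saD; rewrite -[X in lrmul X]trmxCK; apply: sa_lrmul.
Qed.

End SelfAdjoint.

Section Unitization.
Variables (C : numClosedFieldType) (V : lmodType C) (star : V -> V).
Variable nu : forall n, 'M[V]_n -> C.
Arguments nu : clear implicits.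
Hypotheses (C_complete : real_complete C) (starV : is_star star).
Hypothesis nuL : Linf_MOS star nu.

Lemma nu_ge0 n (A : 'M[V]_n) : sa star A -> 0 <= nu n A.
Proof. by case: nuL => nu_ge0 _; apply: nu_ge0. Qed.

Lemma nu_lrmul_le n k (Z : 'M[C]_(n, k)) (A : 'M[V]_n) : sa star A ->
  nu k (lrmul (Z ^t*) A Z) <= opnorm Z ^+ 2 * nu n A.
Proof. by case: nuL => _ [_ [_ [_ [nu_lrmul _]]]]; apply: nu_lrmul. Qed.

Lemma nu_block n k (A : 'M[V]_n) (B : 'M[V]_k) : sa star A -> sa star B ->
  nu (n + k)%N (block_mx A 0 0 B) = Num.max (nu n A) (nu k B).
Proof. by case: nuL => _ [_ [_ [_ [_ nu_blk]]]]; apply: nu_blk. Qed.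

Lemma sa_lrmul_inv n (A : 'M[V]_n) (S T : 'M[C]_n) :
  sa star A -> hroot S T -> sa star (lrmul (invmx S) A (invmx S)).
Proof. by move=> hA [hS _ _]; have := sa_lrmul starV (invmx S) hA; rewrite trmxCV hS. Qed.

Lemma nu_hroot_le n k (A : 'M[V]_n) (Z : 'M[C]_(n, k)) S T S' T' :
  sa star A -> hroot S T -> hroot S' T' ->
  (forall v, qform (Z ^t* *m T *m Z) v <= qform T' v) ->
  nu k (lrmul (invmx S') (lrmul (Z ^t*) A Z) (invmx S'))
    <= nu n (lrmul (invmx S) A (invmx S)).
Proof.
move=> hA rS rS' ZTZ; have [hS uS _] := rS; have [hS' uS' _] := rS'.
pose W := S *m Z *m invmx S'.
have -> : lrmul (invmx S') (lrmul (Z ^t*) A Z) (invmx S') =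
          lrmul (W ^t*) (lrmul (invmx S) A (invmx S)) W.
  rewrite !lrmul_mulmx !trmxC_mul trmxCV hS hS' -!mulmxA mulmxV // mulmx1.
  by rewrite !mulmxA mulVmx // mul1mx.
have W_le1 : opnorm W <= 1.
  apply: opnorm_le => // v; rewrite expr1n mul1r -!mulmxA (sqnorm_hroot _ rS) -qform_conj.
  by apply: le_trans (ZTZ _) _; rewrite (qform_hroot_inv _ rS').
have hN := sa_lrmul_inv hA rS.
apply: le_trans (nu_lrmul_le W hN) _.
by rewrite ler_piMl ?nu_ge0 // exprn_ile1 ?opnorm_ge0.
Qed.


Lemma usetP n (A : 'M[V]_n) X t S : sa star A -> 0 < t -> hroot S (t%:M - X) ->
  uset nu A X t <-> nu n (lrmul (invmx S) A (invmx S)) <= 1.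
Proof.
move=> hA t0 rS; have rM := msqrt_hroot (hroot_pdmx rS).
have nu_le R R' : hroot R (t%:M - X) -> hroot R' (t%:M - X) ->
    nu n (lrmul (invmx R') A (invmx R')) <= nu n (lrmul (invmx R) A (invmx R)).
  move=> rR rR'; have := nu_hroot_le (Z := 1%:M) hA rR rR'.
  by rewrite trmxC1 lrmul1 mul1mx mulmx1 => /(_ (fun v => lexx _)).
split => [[_ [_ nuM]] | nuS]; first exact: le_trans (nu_le _ _ rM rS) nuM.
by split => //; split; [exact: hroot_pdmx rS | exact: le_trans (nu_le _ _ rS rM) nuS].
Qed.

Lemma uset_transfer n k (A : 'M[V]_n) X (Z : 'M[C]_(n, k)) X' t s :
  sa star A -> uset nu A X t -> 0 < s -> pdmx (s%:M - X') ->
  (forall v, qform (Z ^t* *m (t%:M - X) *m Z) v <= qform (s%:M - X') v) ->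
  uset nu (lrmul (Z ^t*) A Z) X' s.
Proof.
move=> hA [_ [pT nuA]] s0 pT' ZTZ; split => //; split => //.
exact: le_trans (nu_hroot_le hA (msqrt_hroot pT) (msqrt_hroot pT') ZTZ) nuA.
Qed.

Lemma uset_up n (A : 'M[V]_n) X t t' : sa star A -> X \is hermsymmx ->
  uset nu A X t -> t < t' -> uset nu A X t'.
Proof.
move=> hA hX At lt_t; have [t0 [[[_ Tt_ge0] _] _]] := At.
have shiftE v : qform (t'%:M - X) v = (t' - t) * sqnorm v + qform (t%:M - X) v.
  by rewrite !qform_shift mulrBl addrA subrK.
have := uset_transfer (Z := 1%:M) hA At (lt_trans t0 lt_t).
rewrite trmxC1 lrmul1; apply => [|v].
  apply: (pdmx_coercive (d := t' - t)); rewrite ?subr_gt0 //.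
    by rewrite hermsymmx_shift // gtr0_real // (lt_trans t0).
  by move=> v; rewrite shiftE lerDl; apply: Tt_ge0.
by rewrite mul1mx mulmx1 shiftE lerDr mulr_ge0 ?sqnorm_ge0 // subr_ge0 ltW.
Qed.

Lemma uset_compress n k (A : 'M[V]_n) X (Z : 'M[C]_(n, k)) t s :
  sa star A -> X \is hermsymmx -> uset nu A X t -> opnorm Z ^+ 2 * t < s ->
  uset nu (lrmul (Z ^t*) A Z) (Z ^t* *m X *m Z) s.
Proof.
move=> hA hX At lt_s; have [t0 [[[_ Tt_ge0] _] _]] := At.
have s0 : 0 < s.
  by apply: le_lt_trans lt_s; rewrite mulr_ge0 ?exprn_ge0 ?(opnorm_ge0 C_complete) ?ltW.
have compE v : qform (s%:M - Z ^t* *m X *m Z) v =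
    (s * sqnorm v - t * sqnorm (Z *m v)) + qform (t%:M - X) (Z *m v).
  by rewrite !qform_shift qform_conj addrA subrK.
have ZtZ v : (s - opnorm Z ^+ 2 * t) * sqnorm v <= s * sqnorm v - t * sqnorm (Z *m v).
  rewrite mulrBl lerD2l lerN2 mulrAC [leRHS]mulrC ler_wpM2l ?(ltW t0) //.
  exact: (sqnorm_mulmx_le C_complete).
apply: (uset_transfer hA At s0) => [|v].
  apply: (pdmx_coercive (d := s - opnorm Z ^+ 2 * t)); rewrite ?subr_gt0 //.
    by rewrite hermsymmx_shift ?gtr0_real ?hermsymmx_conj.
  by move=> v; rewrite compE ler_wpDr //; apply: Tt_ge0.
rewrite qform_conj compE lerDr; apply: le_trans (ZtZ v).
by rewrite mulr_ge0 ?sqnorm_ge0 // subr_ge0 ltW.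
Qed.

Lemma uset_nonempty n (A : 'M[V]_n) X : sa star A -> X \is hermsymmx ->
  exists t, uset nu A X t.
Proof.
move=> hA hX; have [c c0 Xc] := qform_le_sqnorm hX.
pose d := 1 + nu n A.
have d0 : 0 < d by rewrite ltr_pwDl ?nu_ge0.
have Td v : d * sqnorm v <= qform ((c + d)%:M - X) v.
  by rewrite qform_shift (mulrDl c d) addrAC lerDr subr_ge0 Xc.
have cd0 : 0 < c + d := ltr_wpDl c0 d0.
have rS := msqrt_hroot (pdmx_coercive (hermsymmx_shift (gtr0_real cd0) hX) d0 Td).
exists (c + d); apply/(usetP hA cd0 rS).
have [hS _ _] := rS; have := nu_lrmul_le (invmx (msqrt ((c + d)%:M - X))) hA.
rewrite trmxCV hS => /le_trans; apply.
apply: le_trans (ler_wpM2r (nu_ge0 hA) (opnorm_invmx_hroot C_complete rS d0 Td)) _.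
by rewrite ler_pdivrMl // mulr1 lerDr.
Qed.

Lemma unorm_is_glb n (A : 'M[V]_n) X : sa star A -> X \is hermsymmx ->
  is_glb (uset nu A X) (unorm nu A X).
Proof.
move=> hA hX; apply: (inf_is_glb C_complete).
- by move=> t [t0 _]; exact: gtr0_real.
- exact: uset_nonempty.
- by exists 0 => t [t0 _]; exact: ltW.
Qed.

Lemma unorm_ge0 n (A : 'M[V]_n) X : sa star A -> X \is hermsymmx -> 0 <= unorm nu A X.
Proof.
by move=> hA hX; have [_] := unorm_is_glb hA hX; apply => t [t0 _]; exact: ltW.
Qed.

Lemma uset_gt_unorm n (A : 'M[V]_n) X s : sa star A -> X \is hermsymmx ->
  unorm nu A X < s -> uset nu A X s.
Proof.
move=> hA hX lt_s.
have sR : s \is Num.real by rewrite gtr0_real // (le_lt_trans (unorm_ge0 hA hX)).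
have usetR t : uset nu A X t -> t \is Num.real by move=> [t0 _]; exact: gtr0_real.
have [a Aa lt_a] := is_glb_lt (unorm_is_glb hA hX) lt_s usetR sR.
exact: uset_up hA hX Aa lt_a.
Qed.

Lemma unorm_compress n k (A : 'M[V]_n) X (Z : 'M[C]_(n, k)) :
  sa star A -> X \is hermsymmx ->
  unorm nu (lrmul (Z ^t*) A Z) (Z ^t* *m X *m Z) <= opnorm Z ^+ 2 * unorm nu A X.
Proof.
move=> hA hX.
have [lbZ _] := unorm_is_glb (sa_lrmul starV Z hA) (hermsymmx_conj Z hX).
have [_ glbA] := unorm_is_glb hA hX.
have le_t t : uset nu A X t ->
    unorm nu (lrmul (Z ^t*) A Z) (Z ^t* *m X *m Z) <= opnorm Z ^+ 2 * t.
  move=> At; apply/ler_addgt0Pr => e e0; apply: lbZ.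
  by apply: (uset_compress hA hX At); rewrite ltrDl.
have Z0 : 0 <= opnorm Z ^+ 2 by rewrite exprn_ge0 ?(opnorm_ge0 C_complete).
have [Z_eq0 | Z_neq0] := eqVneq (opnorm Z ^+ 2) 0.
  by have [t /le_t] := uset_nonempty hA hX; rewrite Z_eq0 !mul0r.
have Z_gt0 : 0 < opnorm Z ^+ 2 by rewrite lt_def Z_neq0 Z0.
by rewrite -ler_pdivrMl //; apply: glbA => t /le_t; rewrite ler_pdivrMl.
Qed.

Lemma unorm_isometry_le n k (A : 'M[V]_n) X (Z : 'M[C]_(n, k)) :
  sa star A -> X \is hermsymmx -> Z ^t* *m Z = 1%:M ->
  unorm nu (lrmul (Z ^t*) A Z) (Z ^t* *m X *m Z) <= unorm nu A X.
Proof.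
move=> hA hX isoZ; apply: le_trans (unorm_compress Z hA hX) _.
rewrite ler_piMl ?unorm_ge0 // exprn_ile1 ?(opnorm_ge0 C_complete) //.
apply: (opnorm_le C_complete) => // v.
by rewrite expr1n mul1r sqnorm_mulmx isoZ qform_scalar mul1r.
Qed.

Lemma uset_block n k (A : 'M[V]_n) X (B : 'M[V]_k) Y s : sa star A -> sa star B ->
  uset nu A X s -> uset nu B Y s -> uset nu (block_mx A 0 0 B) (block_mx X 0 0 Y) s.
Proof.
move=> hA hB [s0 [pA nuA]] [_ [pB nuB]].
have rA := msqrt_hroot pA; have rB := msqrt_hroot pB.
have := hroot_block rA rB.
have -> : block_mx (s%:M - X) 0 0 (s%:M - Y) = s%:M - block_mx X 0 0 Y.
  by rewrite (scalar_mx_block n k) opp_block_mx add_block_mx !oppr0 !addr0.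
move=> rAB; have [_ uAB _] := rAB.
have hNA := sa_lrmul_inv hA rA; have hNB := sa_lrmul_inv hB rB.
apply/(usetP (sa_block starV hA hB) s0 rAB).
rewrite invmx_block_diag // lrmul_block_diag nu_block //.
have nuR := real_comparable (ger0_real (nu_ge0 hNA)) (ger0_real (nu_ge0 hNB)).
by rewrite (comparable_ge_max _ nuR) nuA nuB.
Qed.

Lemma unorm_block n k (A : 'M[V]_n) X (B : 'M[V]_k) Y :
  sa star A -> X \is hermsymmx -> sa star B -> Y \is hermsymmx ->
  unorm nu (block_mx A 0 0 B) (block_mx X 0 0 Y) = Num.max (unorm nu A X) (unorm nu B Y).
Proof.
move=> hA hX hB hY; have hAB := sa_block starV hA hB; have hXY := hermsymmx_block hX hY.
have uR := real_comparable (ger0_real (unorm_ge0 hA hX)) (ger0_real (unorm_ge0 hB hY)).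
apply/eqP; rewrite eq_le (comparable_ge_max _ uR); apply/and3P; split.
- apply/ler_addgt0Pr => e e0; have [lbAB _] := unorm_is_glb hAB hXY; apply: lbAB.
  have lt_max x : x <= Num.max (unorm nu A X) (unorm nu B Y) ->
      x < Num.max (unorm nu A X) (unorm nu B Y) + e.
    by move=> le_x; rewrite (le_lt_trans le_x) // ltrDl.
  apply: (uset_block hA hB); [apply: (uset_gt_unorm hA hX) | apply: (uset_gt_unorm hB hY)];
    by apply: lt_max; rewrite (comparable_le_max _ uR) lexx ?orbT.
- have := unorm_isometry_le hAB hXY (inl_mx_isometry C n k).
  by rewrite lrmul_inl_block inl_mx_block.
- have := unorm_isometry_le hAB hXY (inr_mx_isometry C n k).
  by rewrite lrmul_inr_block inr_mx_block.
Qed.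

End Unitization.

Theorem lemma3p8 (C : numClosedFieldType) (V : lmodType C) (star : V -> V)
  (nu : forall n, 'M[V]_n -> C) :
  real_complete C -> is_star star -> Linf_MOS star nu ->
  (forall n (A : 'M[V]_n) (X : 'M[C]_n), sa star A -> X \is hermsymmx ->
     (exists t, uset nu A X t) /\
     is_glb (uset nu A X) (unorm nu A X) /\ 0 <= unorm nu A X) /\
  (forall n k (A : 'M[V]_n) (X : 'M[C]_n) (B : 'M[V]_k) (Y : 'M[C]_k)
          (Z : 'M[C]_(n, k)),
     sa star A -> X \is hermsymmx -> sa star B -> Y \is hermsymmx ->
     unorm nu (block_mx A 0 0 B) (block_mx X 0 0 Y)
       = Num.max (unorm nu A X) (unorm nu B Y) /\
     unorm nu (lrmul (Z ^t*) A Z) (Z ^t* *m X *m Z) <= opnorm Z ^+ 2 * unorm nu A X).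
Proof.
move=> C_complete starV nuL.
split => [n A X hA hX | n k A X B Y Z hA hX hB hY].
  split; first exact: (uset_nonempty C_complete starV nuL).
  split; first exact: (unorm_is_glb C_complete starV nuL).
  exact: (unorm_ge0 C_complete starV nuL).
split; first exact: (unorm_block C_complete starV nuL).
exact: (unorm_compress C_complete starV nuL).
Qed.
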